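(* Let $Q$ be an indefinite irrational ternary quadratic form with $\det Q=1$. Then there are at most four rational isotropic lines through the origin, and at most four rational degenerate planes through the origin.
   Context: A quadratic form is rational if it is proportional to a form with rational coefficients, and irrational otherwise. A line through the origin is rational if it is spanned by a vector of $\mathbb{Z}^3$, and isotropic if $Q$ vanishes on a nonzero vector of it. A plane through the origin is rational if spanned by vectors of $\mathbb{Z}^3$, and degenerate if the restriction of $Q$ to it is the square of a linear form. *)

From HB Require Import structures.
From mathcomp Require Import all_boot all_order all_algebra.
From mathcomp Require Import reals.

Set Implicit Arguments.
Unset Strict Implicit.
Unset Printing Implicit Defensive.

Import Order.TTheory GRing.Theory Num.Theory.
Local Open Scope ring_scope.

Section QF.
Variable R : realType.

Definition qf (Q : 'M[R]_3) (x : 'rV[R]_3) : R := (x *m Q *m x^T) 0 0.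

Definition indefinite (Q : 'M[R]_3) : Prop :=
  (exists x, 0 < qf Q x) /\ (exists y, qf Q y < 0).

Definition rational_form (Q : 'M[R]_3) : Prop :=
  exists (c : R) (Q' : 'M[rat]_3), c != 0 /\ Q = c *: map_mx (fun q => ratr q) Q'.

Definition irrational_form (Q : 'M[R]_3) : Prop := ~ rational_form Q.

Definition zvec (v : 'rV[int]_3) : 'rV[R]_3 := map_mx (fun z => z%:~R) v.

Definition rational_line (U : {vspace 'rV[R]_3}) : Prop :=
  \dim U = 1%N /\ exists v : 'rV[int]_3, U = <[zvec v]>%VS.

Definition isotropic_line (Q : 'M[R]_3) (U : {vspace 'rV[R]_3}) : Prop :=
  exists x, x \in U /\ x != 0 /\ qf Q x = 0.

Definition rational_plane (U : {vspace 'rV[R]_3}) : Prop :=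
  \dim U = 2%N /\ exists u v : 'rV[int]_3, U = (<[zvec u]> + <[zvec v]>)%VS.

(* restriction of Q to U is (up to a real scalar, i.e. up to sign) the square
   of a linear form; a linear form on U extends to R^3, i.e. x |-> x a^T *)
Definition degenerate_plane (Q : 'M[R]_3) (U : {vspace 'rV[R]_3}) : Prop :=
  exists (c : R) (a : 'rV[R]_3),
    forall x, x \in U -> qf Q x = c * ((x *m a^T) 0 0) ^+ 2.

End QF.

From HB Require Import structures.
From mathcomp Require Import all_boot all_order all_algebra.
From mathcomp Require Import reals ring zify.
Import Order.TTheory GRing.Theory Num.Theory.
Local Open Scope ring_scope.

(* Five rational points, no three collinear, determine a conic over Q.  Take
   three of them as a rational frame: isotropy kills the diagonal, so the form
   becomes t0 x1 x2 + t1 x0 x2 + t2 x0 x1 up to a factor 2.  Each of the two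
   remaining points gives a rational linear condition on t, and the two
   conditions are independent, so t is proportional to the rational cross
   product of their coefficient vectors.  Pairwise non-orthogonality, which
   replaces "no three collinear", holds because two distinct isotropic lines of
   a nondegenerate ternary form are never orthogonal.
   A degenerate plane U contains a nonzero vector l orthogonal to U, and l Q is
   then a normal of U; so the rational normals of degenerate rational planes
   are isotropic for Q^-1, which is irrational with Q. *)

Definition i0 : 'I_3 := ord0.
Definition i1 : 'I_3 := Ordinal (isT : (1 < 3)%N).
Definition i2 : 'I_3 := Ordinal (isT : (2 < 3)%N).

Lemma ord3P (i : 'I_3) : [\/ i = i0, i = i1 | i = i2].
Proof.
by case: i => [[|[|[|//]]] ?]; [apply: Or31 | apply: Or32 | apply: Or33]; apply: val_inj.
Qed.

Lemma sum3 {V : nmodType} (F : 'I_3 -> V) : \sum_(i < 3) F i = F i0 + F i1 + F i2.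
Proof.
by rewrite !big_ord_recr big_ord0 /= add0r; congr (_ + _ + _); congr F; apply: val_inj.
Qed.

Definition row3 {V : nmodType} (a b c : V) : 'rV[V]_3 := \row_j [:: a; b; c]`_j.

Lemma map_row3 {V W : nmodType} (f : V -> W) (a b c : V) :
  map_mx f (row3 a b c) = row3 (f a) (f b) (f c).
Proof. by apply/rowP => k; rewrite !mxE; case: (ord3P k) => ->. Qed.

Section BilinearForm.
Context {R : comNzRingType} {n : nat}.
Implicit Types (Q : 'M[R]_n) (x y z : 'rV[R]_n).

Definition bf Q x y : R := (x *m Q *m y^T) 0 0.
Definition dot x y : R := (x *m y^T) 0 0.

Lemma bfDl Q x y z : bf Q (x + y) z = bf Q x z + bf Q y z.
Proof. by rewrite /bf !mulmxDl mxE. Qed.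

Lemma bfDr Q x y z : bf Q x (y + z) = bf Q x y + bf Q x z.
Proof. by rewrite /bf linearD /= mulmxDr mxE. Qed.

Lemma bfZl Q a x y : bf Q (a *: x) y = a * bf Q x y.
Proof. by rewrite /bf -!scalemxAl mxE. Qed.

Lemma bfZr Q a x y : bf Q x (a *: y) = a * bf Q x y.
Proof. by rewrite /bf linearZ /= -scalemxAr mxE. Qed.

Lemma dotZr a x y : dot x (a *: y) = a * dot x y.
Proof. by rewrite /dot linearZ /= -scalemxAr mxE. Qed.

Lemma bf_sym {Q} : Q^T = Q -> forall x y, bf Q x y = bf Q y x.
Proof.
move=> Qsym x y; rewrite /bf; have -> : x *m Q *m y^T = (y *m Q *m x^T)^T.
  by rewrite !trmx_mul trmxK Qsym mulmxA.
by rewrite mxE.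
Qed.

Lemma bf_mulmx (P : 'M[R]_n) Q x y : bf (P *m Q *m P^T) x y = bf Q (x *m P) (y *m P).
Proof. by rewrite /bf trmx_mul !mulmxA. Qed.

Lemma bf_deltar Q x k : bf Q x (delta_mx 0 k) = (x *m Q) 0 k.
Proof. by rewrite /bf trmx_delta -colE mxE. Qed.

Lemma entry_bf Q i j : Q i j = bf Q (delta_mx 0 i) (delta_mx 0 j).
Proof. by rewrite bf_deltar -rowE mxE. Qed.

End BilinearForm.

Lemma dotE {R : comNzRingType} (x y : 'rV[R]_3) :
  dot x y = x 0 i0 * y 0 i0 + x 0 i1 * y 0 i1 + x 0 i2 * y 0 i2.
Proof. by rewrite /dot mxE sum3 !mxE. Qed.

Definition cross {R : nzRingType} (u v : 'rV[R]_3) : 'rV[R]_3 :=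
  row3 (u 0 i1 * v 0 i2 - u 0 i2 * v 0 i1)
       (u 0 i2 * v 0 i0 - u 0 i0 * v 0 i2)
       (u 0 i0 * v 0 i1 - u 0 i1 * v 0 i0).

Lemma map_cross {R S : nzRingType} (f : {rmorphism R -> S}) (u v : 'rV[R]_3) :
  map_mx f (cross u v) = cross (map_mx f u) (map_mx f v).
Proof. by rewrite /cross map_row3 !rmorphB !rmorphM !mxE. Qed.

Section CrossProduct.
Context {R : comNzRingType}.
Implicit Types u v w x p q : 'rV[R]_3.

Lemma cross_cross p q w : cross (cross p q) w = dot w p *: q - dot w q *: p.
Proof.
by apply/rowP => k; rewrite !dotE; case: (ord3P k) => ->; rewrite !mxE /=; ring.
Qed.

Lemma dot_cross_span a b u v : dot (a *: u + b *: v) (cross u v) = 0.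
Proof. by rewrite dotE !mxE /=; ring. Qed.

(* Up to the factor [dot n n], [v x n, n x u, n] is the dual basis of [u, v, n]. *)
Lemma cross_decomposition u v x : let n := cross u v in
  dot n n *: x = dot x (cross v n) *: u + dot x (cross n u) *: v + dot x n *: n.
Proof.
by apply/rowP => k; rewrite !dotE; case: (ord3P k) => ->; rewrite !mxE /=; ring.
Qed.

End CrossProduct.

Lemma cross_eq0 {F : fieldType} {u v : 'rV[F]_3} :
  u != 0 -> cross u v = 0 -> exists k, v = k *: u.
Proof.
move=> /rV0Pn[i ui] uv0.
have c k : cross u v 0 k = 0 by rewrite uv0 mxE.
have minor j : u 0 i * v 0 j = u 0 j * v 0 i.
  move: (c i0) (c i1) (c i2); rewrite !mxE /= => /subr0_eq c0 /subr0_eq c1 /subr0_eq c2.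
  by case: (ord3P i) => ->; case: (ord3P j) => ->; rewrite ?c0 ?c1 ?c2.
exists (v 0 i / u 0 i); apply/rowP => j; rewrite mxE.
by apply: (mulfI ui); rewrite minor; field.
Qed.

Lemma orthogonal_cross {F : fieldType} (p q w : 'rV[F]_3) :
  cross p q != 0 -> dot w p = 0 -> dot w q = 0 -> exists k, w = k *: cross p q.
Proof.
move=> pq_neq0 wp wq; apply: cross_eq0 pq_neq0 _.
by rewrite cross_cross wp wq !scale0r subr0.
Qed.

Lemma dot_self_eq0 {R : realDomainType} n (x : 'rV[R]_n) : (dot x x == 0) = (x == 0).
Proof.
apply/eqP/eqP => [xx0|->]; last by rewrite /dot mul0mx mxE.
have /(psumr_eq0P (fun i _ => sqr_ge0 (x 0 i))) x2_0 : \sum_i x 0 i ^+ 2 = 0.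
  by rewrite -[RHS]xx0 /dot mxE; apply: eq_bigr => i _; rewrite mxE expr2.
by apply/rowP => i; rewrite mxE; apply/eqP; rewrite -sqrf_eq0 x2_0.
Qed.

Lemma cross_neq0_of_dim {F : fieldType} (u v : 'rV[F]_3) :
  \dim (<[u]> + <[v]>)%VS = 2 -> cross u v != 0.
Proof.
move=> dimU; apply/eqP => uv0.
suff : (\dim (<[u]> + <[v]>)%VS <= 1)%N by rewrite dimU.
have [->|u_neq0] := eqVneq u 0.
  by apply: leq_trans (dimv_add_leqif _ _) _; rewrite !dim_vline eqxx leq_b1.
have [k ->] := cross_eq0 u_neq0 uv0.
by rewrite (addv_idPl _) ?dim_vline ?leq_b1 // -memvE memvZ // memv_line.
Qed.

Lemma mem_plane_dot {R : realFieldType} (u v x : 'rV[R]_3) : cross u v != 0 ->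
  (x \in <[u]> + <[v]>)%VS = (dot x (cross u v) == 0).
Proof.
move=> n_neq0; apply/idP/eqP => [/memv_addP[_ /vlineP[a ->] [_ /vlineP[b ->] ->]] | xn].
  exact: dot_cross_span.
have nn_neq0 : dot (cross u v) (cross u v) != 0 by rewrite dot_self_eq0.
rewrite -[x](scalerK nn_neq0) cross_decomposition xn scale0r addr0.
by apply: memvZ; apply: memv_add; apply: memvZ; apply: memv_line.
Qed.

Lemma plane_eq_of_normal {R : realFieldType} (u1 v1 u2 v2 : 'rV[R]_3) :
  cross u1 v1 != 0 -> cross u2 v2 != 0 -> <[cross u1 v1]>%VS = <[cross u2 v2]>%VS ->
  (<[u1]> + <[v1]> = <[u2]> + <[v2]>)%VS.
Proof.
move=> n1_neq0 n2_neq0 eq_n.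
have /vlineP[k n2k] : cross u2 v2 \in <[cross u1 v1]>%VS by rewrite eq_n memv_line.
have k_neq0 : k != 0 by apply: contraNneq n2_neq0 => k0; rewrite n2k k0 scale0r.
by apply/vspaceP => x; rewrite !mem_plane_dot // n2k dotZr mulf_eq0 (negbTE k_neq0).
Qed.

Lemma mxrank_totally_isotropic {F : fieldType} m n (Q : 'M[F]_n) (M : 'M[F]_(m, n)) :
  Q \in unitmx -> M *m Q *m M^T = 0 -> ((\rank M).*2 <= n)%N.
Proof.
move=> Qunit /mulmx0_rank_max.
by rewrite mxrank_tr mxrankMfree ?row_free_unit // addnn.
Qed.

Lemma isotropic_orthogonal_proportional {F : fieldType} {Q : 'M[F]_3} {u v : 'rV[F]_3} :
  Q^T = Q -> Q \in unitmx -> bf Q u u = 0 -> bf Q v v = 0 -> bf Q u v = 0 ->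
  u != 0 -> exists k, v = k *: u.
Proof.
move=> Qsym Qunit uu vv uv u_neq0.
have vu : bf Q v u = 0 by rewrite bf_sym.
have mx1_eq0 (A : 'M[F]_1) : A 0 0 = 0 -> A = 0.
  by move=> A0; apply/matrixP => i j; rewrite !ord1 A0 mxE.
have /mxrank_totally_isotropic : col_mx u v *m Q *m (col_mx u v)^T = 0.
  rewrite tr_col_mx mul_col_mx mul_col_mx !mul_mx_row -[0]block_mx0.
  by congr (col_mx (row_mx _ _) (row_mx _ _)); apply: mx1_eq0.
move=> /(_ Qunit); rewrite -addsmxE => rk.
have : (\rank u == \rank (u + v)%MS).
  have := mxrankS (addsmxSl u v); rewrite rank_rV u_neq0 eqn_leq => ->.
  by move: rk => /=; lia.
by rewrite (mxrank_leqif_sup (addsmxSl u v)).2 addsmx_sub => /andP[_ /sub_rVP].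
Qed.

Lemma bf_invmx {F : fieldType} n (Q : 'M[F]_n) x y : Q^T = Q -> Q \in unitmx ->
  bf (invmx Q) (x *m Q) (y *m Q) = bf Q x y.
Proof. by move=> Qsym Qunit; rewrite /bf trmx_mul Qsym !mulmxA mulmxK. Qed.

Lemma square_restriction_radical {F : numFieldType} {n} {Q : 'M[F]_n}
    {U : {vspace 'rV[F]_n}} {c : F} {a : 'rV[F]_n} :
  Q^T = Q -> (1 < \dim U)%N ->
  (forall x, x \in U -> bf Q x x = c * ((x *m a^T) 0 0) ^+ 2) ->
  exists2 l, l != 0 & l \in U /\ forall x, x \in U -> bf Q l x = 0.
Proof.
move=> Qsym dimU Usq.
(* [l] spans the kernel of [x |-> x a^T] on [U]; polarization makes it orthogonal to [U]. *)
pose f := linfun (mulmxr a^T : 'rV[F]_n -> 'rV[F]_1).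
pose l := vpick (U :&: lker f)%VS.
have /memv_capP[lU] := memv_pick (U :&: lker f)%VS.
rewrite memv_ker lfunE /= => /eqP la; have la0 : (l *m a^T) 0 0 = 0 by rewrite la mxE.
exists l; last split => // x xU.
  have fU : (\dim (f @: U) <= 1)%N by rewrite (leq_trans (dimvS (subvf _))) ?dimvf.
  rewrite vpick0 -dimv_eq0; rewrite -(limg_ker_dim f U) in dimU.
  by apply: contraTneq dimU => ->; rewrite add0n -leqNgt.
have e : ((l + x) *m a^T) 0 0 = (x *m a^T) 0 0 by rewrite mulmxDl mxE la0 add0r.
have := Usq _ (rpredD lU xU).
rewrite e bfDl !bfDr (bf_sym Qsym x l) (Usq _ lU) (Usq _ xU) la0 => polar.
have : 2 * bf Q l x = 0.
  by rewrite -(subrr (c * ((x *m a^T) 0 0) ^+ 2)) -{1}polar; ring.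
by move/eqP; rewrite mulf_eq0 pnatr_eq0 => /eqP.
Qed.

Definition offdiag {R : nzRingType} (t : 'rV[R]_3) : 'M[R]_3 :=
  \matrix_(i, j) nth 0 (nth [::] [:: [:: 0; t 0 i2; t 0 i1];
                                     [:: t 0 i2; 0; t 0 i0];
                                     [:: t 0 i1; t 0 i0; 0]] i) j.

Definition pairprod {R : nzRingType} (x : 'rV[R]_3) : 'rV[R]_3 :=
  row3 (x 0 i1 * x 0 i2) (x 0 i0 * x 0 i2) (x 0 i0 * x 0 i1).

Lemma map_offdiag {R S : nzRingType} (f : {rmorphism R -> S}) (t : 'rV[R]_3) :
  map_mx f (offdiag t) = offdiag (map_mx f t).
Proof.
apply/matrixP => i j; rewrite !mxE.
by case: (ord3P i) => ->; case: (ord3P j) => ->; rewrite /= ?rmorph0 ?mxE.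
Qed.

Lemma map_pairprod {R S : nzRingType} (f : {rmorphism R -> S}) (x : 'rV[R]_3) :
  map_mx f (pairprod x) = pairprod (map_mx f x).
Proof. by rewrite /pairprod map_row3 !rmorphM !mxE. Qed.

Section OffDiagonal.
Context {R : comNzRingType}.
Implicit Types t x y : 'rV[R]_3.

Lemma offdiagE (G : 'M[R]_3) : G^T = G -> (forall k, G k k = 0) ->
  G = offdiag (row3 (G i1 i2) (G i0 i2) (G i0 i1)).
Proof.
move=> Gsym Gdiag; have Gs i j : G i j = G j i by rewrite -{1}Gsym mxE.
apply/matrixP => i j; rewrite !mxE.
by case: (ord3P i) => ->; case: (ord3P j) => ->; rewrite /= ?Gdiag // Gs.
Qed.

Lemma offdiagZ a t : offdiag (a *: t) = a *: offdiag t.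
Proof.
apply/matrixP => i j; rewrite !mxE.
by case: (ord3P i) => ->; case: (ord3P j) => ->; rewrite /= ?mxE ?mulr0.
Qed.

Lemma bf_offdiag t x : bf (offdiag t) x x = 2 * dot t (pairprod x).
Proof. by rewrite /bf dotE !(mxE, sum3) /=; ring. Qed.

Lemma mul_offdiag t x : x *m offdiag t =
  row3 (t 0 i2 * x 0 i1 + t 0 i1 * x 0 i2) (t 0 i2 * x 0 i0 + t 0 i0 * x 0 i2)
       (t 0 i1 * x 0 i0 + t 0 i0 * x 0 i1).
Proof.
by apply/rowP => k; rewrite !mxE sum3 !mxE; case: (ord3P k) => -> /=; ring.
Qed.

Lemma cross_pairprod x y :
  cross (pairprod x) (pairprod y) = - \row_k (x 0 k * y 0 k * cross x y 0 k).
Proof. by apply/rowP => k; case: (ord3P k) => ->; rewrite !mxE /=; ring. Qed.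

End OffDiagonal.

Lemma offdiag_unit {F : numFieldType} {t : 'rV[F]_3} :
  (forall k, t 0 k != 0) -> offdiag t \in unitmx.
Proof.
move=> t_neq0.
(* [H] is the adjugate of [offdiag t], whose determinant is [2 t0 t1 t2]. *)
pose H := \matrix_(i, j) (t 0 i * t 0 j - (i == j)%:R * 2 * t 0 i ^+ 2).
suff /mulmx1_unit[] : offdiag t *m ((2 * (t 0 i0 * t 0 i1 * t 0 i2))^-1 *: H) = 1%:M by [].
apply/matrixP => i j; rewrite -scalemxAr !mxE sum3 !mxE.
by case: (ord3P i) => ->; case: (ord3P j) => ->; rewrite /= ?mxE /=; field; rewrite !t_neq0.
Qed.

(* If [x_k = 0], isotropy leaves a single nonzero coordinate [x_m], and then
   [(x *m offdiag t)_m = x_m * 0]. *)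
Lemma offdiag_isotropic_coord_neq0 {F : fieldType} {t x : 'rV[F]_3} :
  (forall k, t 0 k != 0) -> dot t (pairprod x) = 0 ->
  (forall k, (x *m offdiag t) 0 k != 0) -> forall k, x 0 k != 0.
Proof.
move=> t_neq0 iso xG k; apply/eqP => xk0.
have : [&& (x *m offdiag t) 0 i0 != 0, (x *m offdiag t) 0 i1 != 0
         & (x *m offdiag t) 0 i2 != 0] by rewrite !xG.
move: iso; rewrite dotE mul_offdiag !mxE /=.
by case: (ord3P k) xk0 => -> ->; rewrite !(mul0r, mulr0, add0r, addr0) => /eqP;
  rewrite !mulf_eq0 (negbTE (t_neq0 _)) /= => /orP[]/eqP->;
  rewrite !(mulr0, addr0, add0r) eqxx ?andbF.
Qed.

Lemma offdiag_coef_cross {F : numFieldType} (t x y : 'rV[F]_3) :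
  (forall k, t 0 k != 0) ->
  bf (offdiag t) x x = 0 -> bf (offdiag t) y y = 0 ->
  (forall k, (x *m offdiag t) 0 k != 0) -> (forall k, (y *m offdiag t) 0 k != 0) ->
  bf (offdiag t) x y != 0 ->
  exists c, t = c *: cross (pairprod x) (pairprod y).
Proof.
move=> t_neq0 xx yy xG yG xy.
have iso z : bf (offdiag t) z z = 0 -> dot t (pairprod z) = 0.
  by rewrite bf_offdiag => /eqP; rewrite mulf_eq0 pnatr_eq0 => /eqP.
have xk := offdiag_isotropic_coord_neq0 t_neq0 (iso _ xx) xG.
have yk := offdiag_isotropic_coord_neq0 t_neq0 (iso _ yy) yG.
have /rV0Pn[k xy_k] : cross x y != 0.
  have x_neq0 : x != 0 by apply/rV0Pn; exists i0.
  by apply: contra xy => /eqP/(cross_eq0 x_neq0)[c ->]; rewrite bfZr xx mulr0.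
apply: orthogonal_cross; rewrite ?iso //.
by rewrite cross_pairprod oppr_eq0; apply/rV0Pn; exists k; rewrite mxE !mulf_neq0.
Qed.

Section RationalForms.
Variable R : realType.
Notation ratmx := (map_mx (@ratr R)).

Lemma zvec_ratmx (v : 'rV[int]_3) : zvec R v = ratmx (map_mx intr v).
Proof. by apply/rowP => k; rewrite !mxE ratr_int. Qed.

Lemma zvec_cross (u v : 'rV[int]_3) : zvec R (cross u v) = cross (zvec R u) (zvec R v).
Proof. exact: map_cross. Qed.

Lemma rational_form_congr (M : 'M[rat]_3) (G : 'M[R]_3) :
  rational_form G -> rational_form (ratmx M *m G *m (ratmx M)^T).
Proof.
case=> c [G0 [c_neq0 ->]]; exists c, (M *m G0 *m M^T); split => //.
by rewrite -scalemxAr -scalemxAl !map_mxM map_trmx.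
Qed.

Lemma rational_form_invmx (K : 'M[R]_3) : rational_form K -> rational_form (invmx K).
Proof.
move=> ratK; have [Kunit|Knunit] := boolP (K \in unitmx); last by rewrite invmx_out ?inE.
case: ratK Kunit => c [K0 [c_neq0 ->]] Kunit; exists c^-1, (invmx K0).
by rewrite invr_eq0 invmxZ // map_invmx.
Qed.

Lemma rational_form_of_five_isotropic (K : 'M[R]_3) (w : 'I_5 -> 'rV[rat]_3) :
  K^T = K ->
  (forall i, bf K (ratmx (w i)) (ratmx (w i)) = 0) ->
  (forall i j, i != j -> bf K (ratmx (w i)) (ratmx (w j)) != 0) ->
  rational_form K.
Proof.
move=> Ksym iso orth.
pose j : 'I_3 -> 'I_5 := widen_ord (isT : (3 <= 5)%N).
pose j3 : 'I_5 := Ordinal (isT : (3 < 5)%N).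
pose j4 : 'I_5 := Ordinal (isT : (4 < 5)%N).
have j_neq3 k : j3 != j k by rewrite -val_eqE /= gtn_eqF.
have j_neq4 k : j4 != j k by rewrite -val_eqE /= gtn_eqF // (leq_trans (ltn_ord k)).
(* In the rational frame [P] of the first three vectors, [K] becomes [offdiag t]. *)
pose P0 := \matrix_(k < 3) w (j k); pose P := ratmx P0.
have rowP0 k : delta_mx 0 k *m P = ratmx (w (j k)) by rewrite -rowE -map_row rowK.
pose G := P *m K *m P^T.
have Gt : G = offdiag (row3 (G i1 i2) (G i0 i2) (G i0 i1)).
  apply: offdiagE => [|k]; first by rewrite !trmx_mul trmxK Ksym mulmxA.
  by rewrite entry_bf bf_mulmx rowP0 iso.
set t := row3 _ _ _ in Gt.
have t_neq0 k : t 0 k != 0.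
  by rewrite mxE; case: (ord3P k) => -> /=; rewrite entry_bf bf_mulmx !rowP0 orth.
have Punit : P \in unitmx.
  by move: (offdiag_unit t_neq0); rewrite -Gt !unitmx_mul unitmx_tr => /andP[].
have P0unit : P0 \in unitmx by rewrite -(map_unitmx (@ratr R)).
pose x0 := w j3 *m invmx P0; pose y0 := w j4 *m invmx P0.
have xP : ratmx x0 *m P = ratmx (w j3) by rewrite -map_mxM mulmxKV.
have yP : ratmx y0 *m P = ratmx (w j4) by rewrite -map_mxM mulmxKV.
have [c tc] : exists c, t = c *: cross (pairprod (ratmx x0)) (pairprod (ratmx y0)).
  apply: offdiag_coef_cross; rewrite // -Gt ?bf_mulmx ?xP ?yP ?iso ?orth //.
    by move=> k; rewrite -bf_deltar bf_mulmx xP rowP0 orth.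
  by move=> k; rewrite -bf_deltar bf_mulmx yP rowP0 orth.
have c_neq0 : c != 0 by apply: contraNneq (t_neq0 i0); rewrite tc => ->; rewrite scale0r mxE.
have ratG : rational_form G.
  exists c, (offdiag (cross (pairprod x0) (pairprod y0))); split => //.
  by rewrite Gt tc -!map_pairprod -map_cross offdiagZ map_offdiag.
have -> : K = ratmx (invmx P0) *m G *m (ratmx (invmx P0))^T.
  by rewrite map_invmx trmx_inv /G !mulmxA mulVmx // mul1mx mulmxK ?unitmx_tr.
exact: rational_form_congr.
Qed.

Lemma isotropic_vline (Q : 'M[R]_3) (z : 'rV[R]_3) :
  isotropic_line Q <[z]>%VS -> bf Q z z = 0.
Proof.
case=> _ [/vlineP[k ->] [kz_neq0]]; rewrite /qf -/(bf Q _ _) bfZl bfZr => /eqP.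
have k_neq0 : k != 0 by apply: contraNneq kz_neq0 => ->; rewrite scale0r.
by rewrite !mulf_eq0 (negbTE k_neq0) => /eqP.
Qed.

Lemma isotropic_lines_not_orthogonal (Q : 'M[R]_3) (u v : 'rV[R]_3) :
  Q^T = Q -> Q \in unitmx -> u != 0 -> v != 0 -> bf Q u u = 0 -> bf Q v v = 0 ->
  (<[u]> != <[v]>)%VS -> bf Q u v != 0.
Proof.
move=> Qsym Qunit u_neq0 v_neq0 uu vv; apply: contra => /eqP uv.
have [k vk] := isotropic_orthogonal_proportional Qsym Qunit uu vv uv u_neq0.
by rewrite eq_sym eqEdim !dim_vline u_neq0 v_neq0 leqnn andbT -memvE vk memvZ ?memv_line.
Qed.

Lemma degenerate_plane_normal_isotropic (Q : 'M[R]_3) (u v : 'rV[R]_3) :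
  Q^T = Q -> Q \in unitmx -> \dim (<[u]> + <[v]>)%VS = 2 ->
  degenerate_plane Q (<[u]> + <[v]>)%VS -> bf (invmx Q) (cross u v) (cross u v) = 0.
Proof.
move=> Qsym Qunit dimU [c [a Usq]].
have [|l l_neq0 [lU l_rad]] := square_restriction_radical Qsym _ Usq; first by rewrite dimU.
have [k lQ] : exists k, l *m Q = k *: cross u v.
  apply: orthogonal_cross; first exact: cross_neq0_of_dim.
    by apply: l_rad; rewrite (subvP (addvSl _ _)) ?memv_line.
  by apply: l_rad; rewrite (subvP (addvSr _ _)) ?memv_line.
have k_neq0 : k != 0.
  by apply: contraNneq l_neq0 => k0; rewrite -(mulmxK Qunit l) lQ k0 scale0r mul0mx.
have -> : cross u v = k^-1 *: (l *m Q) by rewrite lQ scalerA mulVf // scale1r.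
by rewrite bfZl bfZr bf_invmx // l_rad // !mulr0.
Qed.

Lemma isotropic_line_family_le4 (K : 'M[R]_3) {n} (w : 'I_n -> 'rV[int]_3) :
  K^T = K -> K \in unitmx -> irrational_form K ->
  (forall i, zvec R (w i) != 0 /\ bf K (zvec R (w i)) (zvec R (w i)) = 0) ->
  injective (fun i => <[zvec R (w i)]>%VS) -> (n <= 4)%N.
Proof.
move=> Ksym Kunit Kirr wP w_inj; rewrite leqNgt; apply/negP => n_gt4; apply: Kirr.
pose w5 i := w (widen_ord n_gt4 i).
have w5P i : zvec R (w5 i) != 0 /\ bf K (zvec R (w5 i)) (zvec R (w5 i)) = 0 := wP _.
apply: (@rational_form_of_five_isotropic K (fun i => map_mx intr (w5 i))) => // [i|i j ij].
  by rewrite -zvec_ratmx; case: (w5P i).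
have [[ui_neq0 ui] [uj_neq0 uj]] := (w5P i, w5P j).
rewrite -!zvec_ratmx; apply: isotropic_lines_not_orthogonal => //.
by apply: contra ij => /eqP/w_inj/(congr1 val) ij; apply/eqP/val_inj.
Qed.

Lemma rational_isotropic_lines_le4 (Q : 'M[R]_3) :
  Q^T = Q -> Q \in unitmx -> irrational_form Q ->
  forall s : seq {vspace 'rV[R]_3}, uniq s ->
  (forall U, U \in s -> rational_line U /\ isotropic_line Q U) -> (size s <= 4)%N.
Proof.
move=> Qsym Qunit Qirr s s_uniq sP.
have sPi (i : 'I_(size s)) := sP _ (mem_nth 0%VS (ltn_ord i)).
have /fin_all_exists[v sv] : forall i : 'I_(size s), exists v, nth 0%VS s i = <[zvec R v]>%VS.
  by move=> i; have [[_ [v ->]] _] := sPi i; exists v.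
apply: (isotropic_line_family_le4 Q v Qsym Qunit Qirr) => [i|i j /= eq_ij].
  have [[]] := sPi i; rewrite sv dim_vline => /eqP; rewrite eqb1 => v_neq0 iso.
  by split; last exact: isotropic_vline.
by apply/ord_inj/eqP; rewrite -(nth_uniq 0%VS _ _ s_uniq) ?ltn_ord // !sv eq_ij.
Qed.

Lemma rational_degenerate_planes_le4 (Q : 'M[R]_3) :
  Q^T = Q -> Q \in unitmx -> irrational_form Q ->
  forall s : seq {vspace 'rV[R]_3}, uniq s ->
  (forall U, U \in s -> rational_plane U /\ degenerate_plane Q U) -> (size s <= 4)%N.
Proof.
move=> Qsym Qunit Qirr s s_uniq sP.
have sPi (i : 'I_(size s)) := sP _ (mem_nth 0%VS (ltn_ord i)).
have /fin_all_exists[uv suv] : forall i : 'I_(size s), exists uv : 'rV[int]_3 * 'rV[int]_3,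
    nth 0%VS s i = (<[zvec R uv.1]> + <[zvec R uv.2]>)%VS.
  by move=> i; have [[_ [u [v ->]]] _] := sPi i; exists (u, v).
have dimU i : \dim (<[zvec R (uv i).1]> + <[zvec R (uv i).2]>)%VS = 2.
  by have [[]] := sPi i; rewrite suv.
apply: (isotropic_line_family_le4 (invmx Q) (fun i => cross (uv i).1 (uv i).2)).
- by rewrite trmx_inv Qsym.
- by rewrite unitmx_inv.
- by move/rational_form_invmx; rewrite invmxK.
- move=> i; rewrite zvec_cross; split; first exact: cross_neq0_of_dim.
  have [_] := sPi i; rewrite suv; exact: degenerate_plane_normal_isotropic.
- move=> i j /=; rewrite !zvec_cross => /plane_eq_of_normal eq_ij.
  apply/ord_inj/eqP; rewrite -(nth_uniq 0%VS _ _ s_uniq) ?ltn_ord // !suv eq_ij //.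
  all: exact: cross_neq0_of_dim.
Qed.

End RationalForms.

Theorem lemma2p2 (R : realType) (Q : 'M[R]_3) :
  Q^T = Q -> indefinite Q -> irrational_form Q -> \det Q = 1 ->
  (forall s : seq {vspace 'rV[R]_3}, uniq s ->
     (forall U, U \in s -> rational_line U /\ isotropic_line Q U) ->
     (size s <= 4)%N) /\
  (forall s : seq {vspace 'rV[R]_3}, uniq s ->
     (forall U, U \in s -> rational_plane U /\ degenerate_plane Q U) ->
     (size s <= 4)%N).
Proof.
move=> Qsym _ Qirr detQ.
have Qunit : Q \in unitmx by rewrite unitmxE detQ unitr1.
by split; [apply: rational_isotropic_lines_le4 | apply: rational_degenerate_planes_le4].
Qed.
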